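(* Let $p$ be a prime, $P$ a finite $p$-group, $X$ a set in bijection with $P$, and $G$ the symmetric group on $X$. Regard $P$ as a subgroup of $G$ via the Cayley embedding (the regular permutation representation of $P$ on $X\cong P$). Then the image of ${\rm Res}^G_P\colon H^*(G)\to H^*(P)$ is contained in $I(P,{\cal C}_u)$.
   Context: $H^*(\cdot)$ denotes group cohomology with coefficients in ${\bf F}_p$ (trivial action). ${\cal C}_u={\cal C}_u(P)$ is the category whose objects are the subgroups of $P$ and whose morphisms are all injective group homomorphisms between them. $I(P,{\cal C}_u)$ is the subring of $H^*(P)$ consisting of those $x$ such that for every injective homomorphism $\phi\colon Q\to Q'$ between subgroups of $P$, $\phi^*({\rm Res}^P_{Q'}x)={\rm Res}^P_Q x$ (equivalently, the limit of $H^*$ over ${\cal C}_u$). *)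

From HB Require Import structures.
From mathcomp Require Import all_boot all_order all_algebra all_fingroup all_solvable.
Set Implicit Arguments. Unset Strict Implicit. Unset Printing Implicit Defensive.
Import GRing.Theory.
Local Open Scope ring_scope.

(* Group cohomology H^n(H; R) with trivial coefficients, via the standard
   (inhomogeneous) cochain complex.  An n-cochain on a group H is a function
   f : seq gT -> R, only its values on sequences of length n with entries in H
   matter. *)

Section Cochains.
Variables (gT : finGroupType) (R : comNzRingType).

(* [g_1; ..; g_i g_{i+1}; ..; g_{m}] (0-based i) *)
Definition merge_at (s : seq gT) (i : nat) : seq gT :=
  take i s ++ ((nth 1%g s i * nth 1%g s i.+1)%g :: drop i.+2 s).

(* (d f)(g_1,..,g_{n+1}) = f(g_2,..,g_{n+1})
     + sum_{i=1}^n (-1)^i f(g_1,..,g_i g_{i+1},..,g_{n+1})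
     + (-1)^{n+1} f(g_1,..,g_n) *)
Definition cobound (n : nat) (f : seq gT -> R) (s : seq gT) : R :=
  f (behead s)
  + \sum_(i < n) (-1) ^+ i.+1 * f (merge_at s i)
  + (-1) ^+ n.+1 * f (take n s).

Definition tuple_in (H : {set gT}) (n : nat) (s : seq gT) : Prop :=
  size s = n /\ all (fun g => g \in H) s.

Definition cocycle (H : {set gT}) (n : nat) (f : seq gT -> R) : Prop :=
  forall s, tuple_in H n.+1 s -> cobound n f s = 0.

Definition coboundary_on (H : {set gT}) (n : nat) (f : seq gT -> R) : Prop :=
  match n with
  | 0 => forall s, tuple_in H 0 s -> f s = 0
  | m.+1 => exists c : seq gT -> R,
      forall s, tuple_in H m.+1 s -> f s = cobound m c s
  end.

Definition cohomologous (H : {set gT}) (n : nat) (f g : seq gT -> R) : Prop :=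
  coboundary_on H n (fun s => f s - g s).

End Cochains.

Definition pullback (aT rT : finGroupType) (R : Type) (phi : aT -> rT)
  (f : seq rT -> R) : seq aT -> R := fun s => f (map phi s).

(* Cayley embedding of gT into the symmetric group on (the underlying set of) gT,
   via the (right) regular action x |-> x * a. *)
Definition cayley (gT : finGroupType) : gT -> {perm gT} :=
  actperm ('R%act : action [set: gT] gT).

From HB Require Import structures.
From mathcomp Require Import all_boot all_order all_algebra all_fingroup all_solvable.
From mathcomp Require Import pgroup ring.
Set Implicit Arguments. Unset Strict Implicit. Unset Printing Implicit Defensive.
Local Open Scope group_scope.
Import GRing.Theory.

(* Restricting a class of H^n(Sym(P)) to P through two regular embeddings of a
   subgroup Q -- x |-> cayley x and x |-> cayley (phi x) for an injective
   morphism phi -- gives the same class of H^n(Q).  This is the content of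
   the statement that the image of restriction lies in I(P, C_u).

   The proof has two independent parts.
   1. The two embeddings are conjugate in Sym(P): both make Q act freely with
      #|P : Q| orbits, and a bijection matching the left cosets of Q with those
      of phi @* Q yields a permutation s with cayley (phi x) = cayley x ^ s.
   2. Conjugation by an element T acts trivially on cohomology.  This is proved
      at cochain level through homogeneous cochains: right translation by T of
      homogeneous chains is homotopic to the identity through the prism
      operator, which preserves left invariant cochains; pulling the homotopy
      formula back along the dictionary quots/prods between homogeneous and
      inhomogeneous chains exhibits z o (conjugation by T) - z as an explicit
      coboundary whenever z is a cocycle.
   The theorem follows by combining 1 and 2. *)

Lemma cayleyE (gT : finGroupType) (a y : gT) : cayley a y = y * a.
Proof. by rewrite /cayley actpermE. Qed.

Lemma cayleyM (gT : finGroupType) : {morph @cayley gT : a b / a * b}.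
Proof. by move=> a b; apply/permP => y; rewrite permM !cayleyE mulgA. Qed.

Lemma equipotent_injection (T T' : finType) (A : {set T}) (B : {set T'}) (a0 : T) :
  a0 \in A -> #|A| = #|B| ->
  exists h : T -> T', {in A &, injective h} /\ {in A, forall a, h a \in B}.
Proof.
move=> Aa0 cardAB.
exists (fun a => enum_val (cast_ord cardAB (enum_rank_in Aa0 a))); split.
- move=> a1 a2 Aa1 Aa2 /enum_val_inj /cast_ord_inj e.
  by rewrite -(enum_rankK_in Aa0 Aa1) -(enum_rankK_in Aa0 Aa2) e.
- by move=> a _; exact: enum_valP.
Qed.

Section LeftCosets.
Variables (gT : finGroupType) (H : {group gT}).

Lemma repr_lcoset (C : {set gT}) : C \in lcosets H [set: gT] -> repr C \in C.
Proof. by case/lcosetsP=> w _ ->; exact: mem_repr (lcoset_refl _ _). Qed.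

Lemma lcoset_reprV y : (repr (y *: H))^-1 * y \in H.
Proof. by rewrite -groupV invMg invgK -mem_lcoset (mem_repr _ (lcoset_refl H y)). Qed.

Lemma lcoset_mulr (C : {set gT}) u k :
  C \in lcosets H [set: gT] -> u \in C -> k \in H -> u * k \in C.
Proof.
by case/lcosetsP=> w _ ->; rewrite !mem_lcoset => uH kH; rewrite mulgA groupM.
Qed.

Lemma lcosets_meet (C1 C2 : {set gT}) u :
  C1 \in lcosets H [set: gT] -> C2 \in lcosets H [set: gT] ->
  u \in C1 -> u \in C2 -> C1 = C2.
Proof.
by case/lcosetsP=> w1 _ -> /lcosetsP[w2 _ ->] /lcoset_eqP <- /lcoset_eqP <-.
Qed.

End LeftCosets.

(* The right regular representations of Q and of an injective image phi @* Q
   are conjugate in Sym(gT): a bijection s with s (y * x) = s y * phi x, built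
   by matching the left cosets of Q with those of phi @* Q, intertwines them. *)
Lemma regular_embeddings_conj (gT : finGroupType) (Q : {group gT})
    (phi : {morphism Q >-> gT}) :
  'injm phi -> exists s : {perm gT}, {in Q, forall x, cayley (phi x) = cayley x ^ s}.
Proof.
move=> phi_inj; set cosQ := lcosets Q [set: gT].
set cosK := lcosets (phi @* Q) [set: gT].
have cosQ_y y : y *: Q \in cosQ by apply/lcosetsP; exists y; rewrite ?inE.
have card_cos : #|cosQ| = #|cosK|.
  apply/eqP; rewrite -(eqn_pmul2l (cardG_gt0 Q)) !card_lcosets.
  by rewrite -{2}(card_injm phi_inj (subxx Q)) !Lagrange ?subsetT.
have [h [h_inj h_cos]] := equipotent_injection (cosQ_y 1) card_cos.
pose f y := repr (h (y *: Q)) * phi ((repr (y *: Q))^-1 * y).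
have fM y x : x \in Q -> f (y * x) = f y * phi x.
  move=> Qx; rewrite /f lcosetM (lcoset_id Qx) mulgA morphM ?mulgA //.
  exact: lcoset_reprV.
have f_coset y : f y \in h (y *: Q).
  apply: lcoset_mulr (h_cos _ (cosQ_y y)) (repr_lcoset (h_cos _ (cosQ_y y))) _.
  by apply: mem_morphim; exact: lcoset_reprV.
have f_inj : injective f.
  move=> y1 y2 e; have eC : y1 *: Q = y2 *: Q.
    apply: h_inj (cosQ_y _) (cosQ_y _) _.
    apply: lcosets_meet (h_cos _ (cosQ_y _)) (h_cos _ (cosQ_y _)) (f_coset y1) _.
    by rewrite e.
  move: e; rewrite /f eC => /mulgI /(injmP phi_inj).
  rewrite -{1}eC => /(_ (lcoset_reprV _ _) (lcoset_reprV _ _)); exact: mulgI.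
exists (perm f_inj) => x Qx; apply/permP => y.
by rewrite conjgE !permM !cayleyE permE fM // -(permE f_inj) permKV.
Qed.

Section HomogeneousCochains.
Variables (G : finGroupType) (R : comNzRingType).
Implicit Types (F : seq G -> R) (y : seq G) (T : G).
Local Open Scope ring_scope.

Definition omit (i : nat) y := take i y ++ drop i.+1 y.

Definition prism T (i : nat) y :=
  take i.+1 y ++ map (fun a => (a * T)%g) (drop i y).

Definition hcobound F y : R := \sum_(j < size y) (-1) ^+ j * F (omit j y).

(* Prism operator, a cochain homotopy from right translation by T to the
   identity. *)
Definition hprism T F y : R := \sum_(i < size y) (-1) ^+ i * F (prism T i y).

Lemma size_omit j y : (j < size y)%N -> size (omit j y) = (size y).-1.
Proof.
rewrite /omit size_cat size_take size_drop => lt_jy; rewrite lt_jy.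
by case: (size y) lt_jy => // n; rewrite ltnS subSS => /subnKC.
Qed.

Lemma size_prism T i y : (i < size y)%N -> size (prism T i y) = (size y).+1.
Proof.
move=> lt_iy; rewrite /prism size_cat size_takel // size_map size_drop.
by rewrite addSn subnKC // ltnW.
Qed.

Lemma hcobound_cons F x y :
  hcobound F (x :: y) = F y - hcobound (fun t => F (x :: t)) y.
Proof.
rewrite /hcobound big_ord_recl /= expr0 mul1r /omit /= drop0 -sumrN.
by congr (_ + _); apply: eq_bigr => j _; rewrite exprS mulN1r mulNr.
Qed.

Lemma hprism_cons T F x y :
  hprism T F (x :: y) = F (x :: (x * T)%g :: map (fun a => (a * T)%g) y)
                        - hprism T (fun t => F (x :: t)) y.
Proof.
rewrite /hprism big_ord_recl /= expr0 mul1r /prism /= take0 -sumrN.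
by congr (_ + _); apply: eq_bigr => j _; rewrite exprS mulN1r mulNr.
Qed.

Lemma hcobound_map (f : G -> G) F y :
  hcobound (fun t => F (map f t)) y = hcobound F (map f y).
Proof.
rewrite /hcobound size_map; apply: eq_bigr => j _.
by rewrite /omit map_cat map_take map_drop.
Qed.

Lemma eq_hcobound F1 F2 y : F1 =1 F2 -> hcobound F1 y = hcobound F2 y.
Proof. by move=> eF; apply: eq_bigr => j _; rewrite eF. Qed.

Lemma eq_hprism T F1 F2 y : F1 =1 F2 -> hprism T F1 y = hprism T F2 y.
Proof. by move=> eF; apply: eq_bigr => j _; rewrite eF. Qed.

Lemma hcoboundB F1 F2 y :
  hcobound (fun t => F1 t - F2 t) y = hcobound F1 y - hcobound F2 y.
Proof. by rewrite /hcobound -sumrB; apply: eq_bigr => j _; rewrite mulrBr. Qed.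

Lemma hprismB T F1 F2 y :
  hprism T (fun t => F1 t - F2 t) y = hprism T F1 y - hprism T F2 y.
Proof. by rewrite /hprism -sumrB; apply: eq_bigr => j _; rewrite mulrBr. Qed.

Lemma prism_homotopy T F y :
  hcobound (hprism T F) y + hprism T (hcobound F) y
  = F (map (fun a => (a * T)%g) y) - F y.
Proof.
elim: y F => [|x y IHy] F; first by rewrite /hcobound /hprism !big_ord0 addr0 subrr.
pose Fx t := F (x :: t).
rewrite hcobound_cons (eq_hcobound _ (hprism_cons T F x)) hcoboundB.
rewrite hprism_cons (eq_hprism _ _ (hcobound_cons F x)) hprismB.
rewrite [hcobound F _]hcobound_cons (hcobound_cons Fx).
rewrite -(hcobound_map (fun a => (a * T)%g)).
rewrite -(addrK (hprism T (hcobound Fx) y) (hcobound (hprism T Fx) y)) IHy /=.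
by rewrite /Fx; ring.
Qed.

(* Dictionary with inhomogeneous cochains: a homogeneous chain y is recorded
   by its successive quotients, and an inhomogeneous chain t by its partial
   products starting from 1. *)
Definition quot (a b : G) : G := (a^-1 * b)%g.
Definition quots y : seq G := pairmap quot (head 1%g y) (behead y).
Definition prods (t : seq G) : seq G := 1%g :: scanl (fun a b => a * b)%g 1%g t.

Lemma size_quots y : size (quots y) = (size y).-1.
Proof. by rewrite /quots size_pairmap size_behead. Qed.

Lemma size_prods t : size (prods t) = (size t).+1.
Proof. by rewrite /= size_scanl. Qed.

Lemma quotsK : cancel prods quots.
Proof.
rewrite /prods /quots /= => t; elim: t 1%g => //= a t IHt x.
by rewrite /quot mulKg IHt.
Qed.

Lemma quots_mull u y : quots (map (fun a => u * a)%g y) = quots y.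
Proof.
case: y => //= y0 y; rewrite /quots /=.
by elim: y y0 => //= a y IHy x; rewrite IHy /quot invMg -mulgA mulKg.
Qed.

Lemma quots_mulr T y :
  quots (map (fun a => a * T)%g y) = map (fun a => a ^ T)%g (quots y).
Proof.
case: y => //= y0 y; rewrite /quots /=.
by elim: y y0 => //= a y IHy x; rewrite IHy /quot conjgE invMg !mulgA.
Qed.

Lemma prods_quots x y :
  prods (quots (x :: y)) = map (fun a => x^-1 * a)%g (x :: y).
Proof.
rewrite /prods /quots /= mulVg; congr (_ :: _).
have scanl_pairmap (u a : G) (s : seq G) : scanl (fun a b => a * b)%g (u * a)%g
    (pairmap quot a s) = map (fun b => u * b)%g s.
  by elim: s u a => //= b s IHs u a; rewrite mulgA mulgK IHs.
by rewrite -(mulVg x) scanl_pairmap.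
Qed.

Lemma quots_omit i x y : (i.+1 < size y)%N ->
  pairmap quot x (omit i y) = merge_at (pairmap quot x y) i.
Proof.
elim: i x y => [|i IHi] x [|a y] //=; last by move=> lt_iy; rewrite -/(omit i y) IHi.
by case: y => [|b y] //= _; rewrite /omit /merge_at /= drop0 /quot mulgA mulgK.
Qed.

Lemma quots_take k x y : pairmap quot x (take k y) = take k (pairmap quot x y).
Proof. by elim: y x k => [|a y IHy] x [|k] //=; rewrite IHy. Qed.

Lemma hcobound_quots (f : seq G -> R) m y : size y = m.+2 ->
  hcobound (fun t => f (quots t)) y = cobound m f (quots y).
Proof.
case: y => // x y [size_y]; rewrite /hcobound /= size_y big_ord_recl big_ord_recr /=.
rewrite /cobound expr0 mul1r addrA; congr (_ + _ + _).
- by case: y size_y => // a y _; rewrite /omit /quots /= drop0.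
- apply: eq_bigr => i _; rewrite /quots /= /bump /= add1n /omit /=.
  by rewrite -/(omit i y) quots_omit // size_y ltnS.
- rewrite /quots /= /omit /= drop_oversize ?size_y // cats0 quots_take.
  by rewrite /bump /= add1n.
Qed.

Definition left_invariant F := forall u t, F (map (fun a => u * a)%g t) = F t.

Lemma prism_mull T u i y :
  prism T i (map (fun a => u * a)%g y) = map (fun a => u * a)%g (prism T i y).
Proof.
rewrite /prism map_cat map_take map_drop -!map_comp; congr (_ ++ _).
by rewrite -map_drop; apply: eq_map => a /=; rewrite mulgA.
Qed.

Lemma hprism_left_invariant T F : left_invariant F -> left_invariant (hprism T F).
Proof.
move=> invF u y; rewrite /hprism size_map.
by apply: eq_bigr => i _; rewrite prism_mull invF.
Qed.

Lemma left_invariant_prods F y :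
  left_invariant F -> (0 < size y)%N -> F y = F (prods (quots y)).
Proof. by case: y => // x y invF _; rewrite prods_quots invF. Qed.

End HomogeneousCochains.

Lemma cobound_pullback (aT rT : finGroupType) (R : comNzRingType) (f : aT -> rT)
    (m : nat) (c : seq rT -> R) (s : seq aT) :
  {morph f : a b / a * b} -> size s = m.+1 ->
  cobound m c (map f s) = cobound m (pullback f c) s.
Proof.
move=> fM size_s; rewrite /cobound /pullback behead_map map_take.
congr (_ + _ + _)%R.
apply: eq_bigr => i _; congr (_ * c _)%R.
rewrite /merge_at map_cat map_take /= map_drop fM.
by rewrite !(nth_map 1) // size_s ?ltnS ?ltn_ord // ltnW.
Qed.

Lemma conjugate_pullbacks_cohomologous (aT rT : finGroupType) (R : comNzRingType)
    (H : {set aT}) (f g : aT -> rT) (T : rT) (n : nat) (z : seq rT -> R) :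
  {morph f : a b / a * b} -> {in H, forall x, g x = f x ^ T} ->
  cocycle [set: rT] n z -> cohomologous H n (pullback g z) (pullback f z).
Proof.
move=> fM gE; case: n z => [|m] z z_cocycle.
  by move=> s [/size0nil -> _]; rewrite subrr.
pose Z t := z (quots t).
have invZ : left_invariant Z by move=> u t; rewrite /Z quots_mull.
pose c t := hprism T Z (prods t).
exists (pullback f c) => s [size_s Hs].
set t := map f s; have size_t : size t = m.+1 by rewrite size_map.
have size_pt : size (prods t) = m.+2 by rewrite size_prods size_t.
have dZ_prism : hprism T (hcobound Z) (prods t) = 0%R.
  rewrite /hprism big1 // => i _; rewrite (@hcobound_quots _ _ z m.+1).
    rewrite z_cocycle ?mulr0 //; split; last exact/allP.
    by rewrite size_quots size_prism ?size_pt.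
  by rewrite size_prism ?size_pt.
have d_c : hcobound (hprism T Z) (prods t) = cobound m c t.
  rewrite -{2}[t]quotsK -hcobound_quots //; apply: eq_bigr => j _.
  by rewrite (left_invariant_prods (hprism_left_invariant T invZ)) // size_omit ?size_pt.
rewrite /pullback -cobound_pullback // -d_c -[RHS]addr0 -dZ_prism prism_homotopy.
rewrite /Z quots_mulr !quotsK /t -map_comp; congr (z _ - _)%R.
by apply/eq_in_map => x sx; rewrite /= gE // (allP Hs).
Qed.

Theorem theorem3 (p : nat) (gT : finGroupType) (p_pr : prime p)
  (pP : (p.-group [set: gT])%g)
  (n : nat) (z : seq {perm gT} -> 'F_p)
  (z_cocycle : cocycle [set: {perm gT}] n z)
  (Q Q' : {group gT}) (phi : {morphism Q >-> gT})
  (phi_inj : 'injm phi) (phi_into : phi @* Q \subset Q') :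
  cohomologous Q n (pullback (fun x => cayley (phi x)) z) (pullback (@cayley gT) z).
Proof.
have [s phi_conj] := regular_embeddings_conj phi_inj.
exact: conjugate_pullbacks_cohomologous (@cayleyM gT) phi_conj z_cocycle.
Qed.
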